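(* Let $N\ge1$, let $(\mathbf s^0,\dots,\mathbf s^{N-1})$ be an $(N,1,\mathbb L)$-$N$-CO-SF where $\mathbf s^m$ has length $l^{(m)}N$, and let $\mathbf U=[u^n_k]$ be an $N\times N$ unitary-like matrix with rows $\mathbf u^0,\dots,\mathbf u^{N-1}$. For $0\le m,n<N$ define the sequence $\mathbf c^m_n$ of length $l^{(m)}N$ by $$c^m_n(k)=u^n_{[k]_N}\,s^m(k),\qquad 0\le k<l^{(m)}N$$ (equivalently $\mathbf c^m_n=\mathbf u^n\odot\mathbb S^{(m)}$, where $\mathbb S^{(m)}$ is the set of the $l^{(m)}N$ length-one sequences $(s^m(k))$, $0\le k<l^{(m)}N$). Then, with $\mathbb C^m=(\mathbf c^m_0,\dots,\mathbf c^m_{N-1})$, the family $(\mathbb C^0,\dots,\mathbb C^{N-1})$ is an $(N,N,\mathbb L)$-CCC.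
   Context: All sequences are finite complex sequences. A sequence $\mathbf s=(s_0,\dots,s_{L-1})$ of length $L$ is identified with the function $s:\mathbb Z\to\mathbb C$ given by $s(n)=s_n$ for $0\le n<L$ and $s(n)=0$ otherwise. $[a]_b$ denotes the remainder of $a$ modulo $b$. For sequences $\mathbf s,\mathbf s'$ of lengths $L,L'$ (possibly different), the aperiodic correlation is $R_{\mathbf s,\mathbf s'}(\tau)=\sum_{l=0}^{L-1}s(l)\,\overline{s'(l+\tau)}$ for $\tau\in\mathbb Z$. The energy of $\mathbf s$ is $E_{\mathbf s}=R_{\mathbf s,\mathbf s}(0)$. An $(M,1,\mathbb L)$-$N$-shift cross-orthogonal sequence family ($N$-CO-SF) is an indexed family $(\mathbf s^0,\dots,\mathbf s^{M-1})$ of complex sequences, where $\mathbf s^m$ has length $L^{(m)}$ divisible by $N$, and $\mathbb L$ is the set of distinct values among $L^{(0)},\dots,L^{(M-1)}$, such that for all $0\le m,m'<M$ and all $k\in\mathbb Z$, $R_{\mathbf s^m,\mathbf s^{m'}}(kN)=E_{\mathbf s^m}\,\delta(m-m')\,\delta(k)$, where $\delta$ is the Kronecker delta. An $n\times n$ complex matrix $\mathbf U$ is unitary-like if $\mathbf U\mathbf U^H=\mathbf U^H\mathbf U=\alpha\mathbf I_n$ for some real $\alpha>0$. An $(N,L)$-sequence set is an indexed set $\mathbb S=(\mathbf s_0,\dots,\mathbf s_{N-1})$ of $N$ sequences of common length $L$. For an $(N,L)$-sequence set $\mathbb S$ and an $(N,L')$-sequence set $\mathbb S'=(\mathbf s'_0,\dots,\mathbf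 s'_{N-1})$, the correlation sum is $\mathcal R_{\mathbb S,\mathbb S'}(\tau)=\sum_{n=0}^{N-1}R_{\mathbf s_n,\mathbf s'_n}(\tau)$, and the energy of $\mathbb S$ is $E_{\mathbb S}=\mathcal R_{\mathbb S,\mathbb S}(0)$. An $(M,N,\mathbb L)$-complete complementary code (CCC) is an indexed family $(\mathbb C^0,\dots,\mathbb C^{M-1})$ where $\mathbb C^m=(\mathbf c^m_0,\dots,\mathbf c^m_{N-1})$ is an $(N,L^{(m)})$-sequence set, $\mathbb L$ is the set of distinct values among the $L^{(m)}$, and for all $0\le m,m'<M$ and all $\tau\in\mathbb Z$, $\mathcal R_{\mathbb C^m,\mathbb C^{m'}}(\tau)=E_{\mathbb C^m}\,\delta(m-m')\,\delta(\tau)$. *)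

From HB Require Import structures.
From mathcomp Require Import all_boot all_order all_algebra.
Set Implicit Arguments. Unset Strict Implicit. Unset Printing Implicit Defensive.
Import Order.TTheory GRing.Theory Num.Theory.
Local Open Scope ring_scope.

Section Seqs.
Variable C : numClosedFieldType.

(* A finite sequence s : seq C viewed as a function Z -> C, zero outside [0, size s). *)
Definition seqval (s : seq C) (n : int) : C :=
  match n with Posz k => nth 0 s k | Negz _ => 0 end.

Definition corr (s s' : seq C) (tau : int) : C :=
  \sum_(l < size s) seqval s (Posz l) * (seqval s' (Posz l + tau))^*.

Definition energy (s : seq C) : C := corr s s 0.

Definition is_NCO_SF (N M : nat) (S : 'I_M -> seq C) : Prop :=
  (forall m, (N %| size (S m))%N) /\
  forall (m m' : 'I_M) (k : int),
    corr (S m) (S m') (k * (Posz N)) =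
      energy (S m) * (m == m')%:R * (k == 0)%:R.

Definition adjmx (m n : nat) (U : 'M[C]_(m, n)) : 'M[C]_(n, m) := (map_mx Num.conj U)^T.

Definition unitary_like (n : nat) (U : 'M[C]_n) : Prop :=
  exists alpha : C, alpha \is Num.real /\ 0 < alpha /\
    U *m adjmx U = alpha%:M /\ adjmx U *m U = alpha%:M.

Definition corr_sum (N : nat) (S S' : 'I_N -> seq C) (tau : int) : C :=
  \sum_(n < N) corr (S n) (S' n) tau.

Definition energy_set (N : nat) (S : 'I_N -> seq C) : C := corr_sum S S 0.

Definition is_CCC (M N : nat) (F : 'I_M -> 'I_N -> seq C) : Prop :=
  (forall m (n n' : 'I_N), size (F m n) = size (F m n')) /\
  forall (m m' : 'I_M) (tau : int),
    corr_sum (F m) (F m') tau =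
      energy_set (F m) * (m == m')%:R * (tau == 0)%:R.

Definition modulate (N : nat) (HN : (0 < N)%N) (U : 'M[C]_N) (n : 'I_N)
  (s : seq C) : seq C :=
  mkseq (fun k => U n (Ordinal (ltn_pmod k HN)) * nth 0 s k) (size s).

End Seqs.

From HB Require Import structures.
From mathcomp Require Import all_boot all_order all_algebra.
Import Order.TTheory GRing.Theory Num.Theory.
Local Open Scope ring_scope.

(* Since the columns of U are orthogonal of common norm alpha (U^H U = alpha I),
   summing c^m_n(l) conj(c^m'_n(l + tau)) over the rows n leaves
   alpha [l = l + tau mod N] s^m(l) conj(s^m'(l + tau)).  Hence the correlation
   sum of C^m and C^m' at tau is alpha [N | tau] R_{s^m, s^m'}(tau): it vanishes
   off multiples of N, and on tau = kN the N-shift cross-orthogonality of the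
   family applies. *)

Section Modulation.
Set Implicit Arguments.
Variables (C : numClosedFieldType) (N : nat) (HN : (0 < N)%N).

Local Notation ord_mod k := (Ordinal (ltn_pmod k HN)).

Lemma eq_ord_mod (l j : nat) : (ord_mod j == ord_mod l) = (N %| j%:Z - l%:Z)%Z.
Proof.
rewrite -eqz_mod_dvd !modz_nat.
by apply/eqP/eqP => [[->] // | [] Ejl]; apply/val_inj.
Qed.

Lemma adjmx_mulmxE (U : 'M[C]_N) i j :
  (adjmx U *m U) i j = \sum_(n < N) (U n i)^* * U n j.
Proof. by rewrite !mxE; apply: eq_bigr => n _; rewrite !mxE. Qed.

Lemma seqval_modulate (U : 'M[C]_N) n s (k : nat) :
  seqval (modulate HN U n s) k = U n (ord_mod k) * seqval s k.
Proof.
rewrite /= /modulate; case: (ltnP k (size s)) => Hk; first by rewrite nth_mkseq.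
by rewrite !nth_default ?mulr0 ?size_mkseq.
Qed.

Lemma dvdz_corr_NCO_SF (M : nat) (S : 'I_M -> seq C) :
  is_NCO_SF N S -> forall m m' (tau : int),
  (N %| tau)%Z%:R * corr (S m) (S m') tau =
    energy (S m) * (m == m')%:R * (tau == 0)%:R.
Proof.
move=> [_ coSM] m m' tau.
case: (boolP (N %| tau)%Z) => [Ndvd | Ndvd]; last first.
  have /negbTE -> : tau != 0 by apply: contraNneq Ndvd => ->; rewrite dvdz0.
  by rewrite !mulr0 mul0r.
have N0 : N%:Z != 0 by rewrite -lt0n.
by rewrite mul1r -(divzK Ndvd) coSM mulf_eq0 (negbTE N0) orbF.
Qed.

Variables (U : 'M[C]_N) (alpha : C).
Hypothesis adjmxUU : adjmx U *m U = alpha%:M.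

Lemma sum_modulate_corr_term s s' (l : nat) (tau : int) :
  \sum_(n < N) seqval (modulate HN U n s) l *
      (seqval (modulate HN U n s') (l%:Z + tau))^* =
  alpha * (N %| tau)%Z%:R * (seqval s l * (seqval s' (l%:Z + tau))^*).
Proof.
case Elt: (l%:Z + tau) => [j|j]; last first.
  by rewrite /= conjC0 !mulr0 big1 // => n _; rewrite mulr0.
under eq_bigr => n _ do rewrite !seqval_modulate rmorphM /= mulrACA [U n _ * _]mulrC.
have -> : tau = j%:Z - l%:Z by rewrite -Elt addrC addKr.
by rewrite -mulr_suml -adjmx_mulmxE adjmxUU mxE eq_ord_mod mulr_natr.
Qed.

Lemma corr_sum_modulate s s' (tau : int) :
  corr_sum (fun n => modulate HN U n s) (fun n => modulate HN U n s') tau =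
  alpha * (N %| tau)%Z%:R * corr s s' tau.
Proof.
rewrite /corr_sum /corr.
under eq_bigr => n _ do rewrite {1}/modulate size_mkseq.
rewrite exchange_big /= mulr_sumr.
by apply: eq_bigr => l _; rewrite sum_modulate_corr_term.
Qed.

End Modulation.

Theorem theorem5 (C : numClosedFieldType) (N : nat) (HN : (0 < N)%N)
  (S : 'I_N -> seq C) (U : 'M[C]_N) :
  is_NCO_SF N S -> unitary_like U ->
  is_CCC (fun (m : 'I_N) (n : 'I_N) => modulate HN U n (S m)).
Proof.
move=> coS [alpha [_ [_ [_ adjmxUU]]]].
split=> [m n n' | m m' tau]; first by rewrite /modulate !size_mkseq.
rewrite /energy_set !(corr_sum_modulate HN adjmxUU) dvdz0 mulr1.
by rewrite -mulrA (dvdz_corr_NCO_SF HN coS) !mulrA.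
Qed.
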